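(* Let $k\ge2$ be an integer and $n\in\mathbb Z$, and suppose that $H=(L_k^{(0)})^2$ is invertible (over $\mathbb Q$). Then $L_k^{(n)}$ is invertible and its inverse is $L_k^{(-n)}H^{-1}$.
   Context: Fix an integer $k\ge2$. Let $Q_k$ be the $k\times k$ matrix whose first row is all ones, with $(Q_k)_{i+1,i}=1$ for $1\le i\le k-1$ and all other entries $0$, and for $r\in\mathbb Z$ let $Q_k^r$ denote its $r$-th power. The generalized Lucas sequence of order $k$, $(l_{k,n})_{n\in\mathbb Z}$, is the two-sided sequence satisfying $l_{k,n+k}=l_{k,n+k-1}+\dots+l_{k,n}$ for all $n\in\mathbb Z$ with initial values $l_{k,r}=\operatorname{trace}(Q_k^r)$ for $0\le r\le k-1$ (so $l_{k,0}=k$ and $l_{k,r}=2^r-1$ for $1\le r\le k-1$). For $n\in\mathbb Z$ the generalized Lucas matrix $L_k^{(n)}$ is the $k\times k$ matrix with entries $(L_k^{(n)})_{i,1}=l_{k,k+n-i}$ and $(L_k^{(n)})_{i,j}=\sum_{m=n-i+j-1}^{k+n-i-1} l_{k,m}$ for $2\le j\le k$, $1\le i\le k$. *)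

From HB Require Import structures.
From mathcomp Require Import all_boot all_order all_algebra.
Set Implicit Arguments. Unset Strict Implicit. Unset Printing Implicit Defensive.
Import Order.TTheory GRing.Theory Num.Theory.
Local Open Scope ring_scope.

Definition Qk (k : nat) : 'M[int]_k :=
  \matrix_(i < k, j < k) (if (i == 0%N :> nat) || (i == j.+1 :> nat) then 1 else 0).

(* l : Z -> Z is the generalized Lucas sequence of order k: it satisfies
   l_{n+k} = l_{n+k-1} + ... + l_n for all n in Z, and l_r = trace(Q_k^r) for 0 <= r <= k-1.
   (Such a two-sided sequence exists and is unique.) *)
Definition is_gen_lucas (k : nat) (l : int -> int) : Prop :=
  (forall n : int, l (n + k%:Z) = \sum_(t < k) l (n + t%:Z)) /\
  (forall r : nat, (r < k)%N -> l r%:Z = \tr (Qk k ^+ r)).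

(* The generalized Lucas matrix L_k^{(n)} (0-indexed i, j; paper's indices are i+1, j+1):
   (L)_{i,1} = l_{k+n-i}, and for 2 <= j <= k,
   (L)_{i,j} = sum_{m = n-i+j-1}^{k+n-i-1} l_m  (k - j + 1 terms). *)
Definition lucas_mx (k : nat) (l : int -> int) (n : int) : 'M[rat]_k :=
  \matrix_(i < k, j < k)
    (if j == 0%N :> nat then (l (k%:Z + n - (i.+1)%:Z))%:~R
     else \sum_(t < k - j) (l (n - (i.+1)%:Z + (j.+1)%:Z - 1 + t%:Z))%:~R).

From HB Require Import structures.
From mathcomp Require Import all_boot all_order all_algebra.
From mathcomp Require Import zify ring.
Import GRing.Theory Num.Theory.
Local Open Scope ring_scope.

(* Only the recurrence matters.  Every entry of L^(n) is a sum of k - j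
   consecutive Lucas numbers (column 0 included, by the recurrence), from which
   one reads off Q L^(n) = L^(n+1) = L^(n) Q.  Hence L^(a+1) L^(b) = L^(a) L^(b+1),
   so L^(a) L^(b) depends only on a + b and L^(n) L^(-n) = H, which exhibits
   L^(-n) H^-1 as a right inverse of L^(n). *)

Section LucasMatrices.
Variables (k : nat) (l : int -> int).
Hypothesis l_rec : forall n : int, l (n + k%:Z) = \sum_(t < k) l (n + t%:Z).

Local Notation lq m := ((l m)%:~R : rat).
Local Notation L := (lucas_mx k l).
Local Notation Q := (map_mx intr (Qk k) : 'M[rat]_k).

Lemma lucas_sum_window (m : int) : \sum_(t < k) lq (m + t%:Z) = lq (m + k%:Z).
Proof. by rewrite l_rec rmorph_sum. Qed.

Lemma lucas_sum_prev (m : int) : \sum_(r < k) lq (m - r%:Z) = lq (m + 1).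
Proof.
rewrite (reindex_inj rev_ord_inj) /=.
have -> : m + 1 = (m + 1 - k%:Z) + k%:Z by ring.
rewrite -lucas_sum_window; apply: eq_bigr => r _.
by congr (l _)%:~R; have := ltn_ord r; lia.
Qed.

Definition lucas_entry (j : nat) (m : int) : rat :=
  \sum_(t < k - j) lq (m + j%:Z - 1 + t%:Z).

Lemma lucas_entry_out j m : (k <= j)%N -> lucas_entry j m = 0.
Proof. by rewrite /lucas_entry -subn_eq0 => /eqP ->; rewrite big_ord0. Qed.

Lemma lucas_mxE n (i j : 'I_k) : L n i j = lucas_entry j (n - i%:Z).
Proof.
rewrite mxE /lucas_entry; case: eqP => [-> | _].
  by rewrite subn0 lucas_sum_window; congr (l _)%:~R; lia.
by apply: eq_bigr => t _; congr (l _)%:~R; lia.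
Qed.

Lemma lucas_entry_sum_prev j m :
  \sum_(r < k) lucas_entry j (m - r%:Z) = lucas_entry j (m + 1).
Proof.
rewrite exchange_big; apply: eq_bigr => t _.
have -> : m + 1 + j%:Z - 1 + t%:Z = (m + j%:Z - 1 + t%:Z) + 1 by ring.
rewrite -lucas_sum_prev.
by apply: eq_bigr => r _; congr (l _)%:~R; ring.
Qed.

Lemma lucas_entry_succ j m : (j < k)%N ->
  lucas_entry 0 m + lucas_entry j.+1 m = lucas_entry j (m + 1).
Proof.
move=> ltjk; rewrite /lucas_entry.
have -> : (k - j = (k - j.+1).+1)%N by lia.
rewrite big_ord_recr /= addrC subn0 lucas_sum_window.
congr (_ + _); first by congr (l _)%:~R; lia.
by apply: eq_bigr => t _; congr (l _)%:~R; lia.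
Qed.

Lemma Qk_ratE (i j : 'I_k) :
  Q i j = if (i == 0%N :> nat) || (i == j.+1 :> nat) then 1 else 0.
Proof. by rewrite !mxE; case: ifP. Qed.

Lemma Qk_mul_lucas_mx n : Q *m L n = L (n + 1).
Proof.
apply/matrixP => i j; rewrite mxE lucas_mxE.
under eq_bigr => r _ do rewrite Qk_ratE lucas_mxE.
case: i => [[|i] lt_ik] /=.
  by under eq_bigr do rewrite mul1r; rewrite lucas_entry_sum_prev subr0.
pose F (r : nat) := lucas_entry j (n - r%:Z).
rewrite (eq_bigr (fun r : 'I_k => if r == i :> nat then F r else 0)).
  by rewrite -big_mkcond big_ord1_eq ltnW // /F; congr lucas_entry; lia.
by move=> r _; rewrite eqSS eq_sym; case: eqP; rewrite ?mul1r ?mul0r.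
Qed.

Lemma lucas_mx_mul_Qk n : L n *m Q = L (n + 1).
Proof.
apply/matrixP => i j; rewrite mxE lucas_mxE.
pose F (r : nat) := lucas_entry r (n - i%:Z).
rewrite (eq_bigr (fun r : 'I_k =>
  (if r == 0%N :> nat then F r else 0) + (if r == j.+1 :> nat then F r else 0))).
  rewrite big_split -!big_mkcond /= !big_ord1_eq (leq_trans _ (ltn_ord i)) //.
  rewrite [X in _ + X](_ : _ = F j.+1); last first.
    by rewrite /F; case: ltnP => // /lucas_entry_out ->.
  by rewrite /F lucas_entry_succ //; congr lucas_entry; lia.
move=> r _; rewrite Qk_ratE lucas_mxE /F.
case: r => [[|r] lt_rk] /=; first by rewrite mulr1 addr0.
by rewrite add0r; case: ifP; rewrite ?mulr1 ?mulr0.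
Qed.

Lemma lucas_mx_mul_shift a b : L (a + 1) *m L b = L a *m L (b + 1).
Proof. by rewrite -Qk_mul_lucas_mx -lucas_mx_mul_Qk mulmxA. Qed.

Lemma lucas_mx_mul a b : L a *m L b = L 0 *m L (a + b).
Proof.
elim/int_ind: a b => [b | a IH b | a IH b]; first by rewrite add0r.
  have -> : (a.+1)%:Z = a%:Z + 1 by lia.
  by rewrite lucas_mx_mul_shift IH; congr (_ *m L _); lia.
rewrite -[b](subrK 1) -lucas_mx_mul_shift.
have -> : - (a.+1)%:Z + 1 = - a%:Z by lia.
by rewrite IH; congr (_ *m L _); lia.
Qed.

End LucasMatrices.

Theorem theorem7 (k : nat) (l : int -> int) (n : int) :
  (2 <= k)%N -> is_gen_lucas k l ->
  let H := lucas_mx k l 0 *m lucas_mx k l 0 in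
  H \in unitmx ->
  lucas_mx k l n \in unitmx /\
  invmx (lucas_mx k l n) = lucas_mx k l (- n) *m invmx H.
Proof.
move=> _ [l_rec _] H H_unit.
have right_inv : lucas_mx k l n *m (lucas_mx k l (- n) *m invmx H) = 1%:M.
  by rewrite mulmxA lucas_mx_mul // subrr mulmxV.
have [L_unit _] := mulmx1_unit right_inv.
by split=> //; rewrite -[RHS](mulKmx L_unit) right_inv mulmx1.
Qed.
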